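(* Let $G_{P,\mathcal{K}'}$ be the closure under R1–R4 of a pattern $P$ with consistent background knowledge $\mathcal{K}'$. Suppose $a_m - b$ is undirected in $G_{P,\mathcal{K}'}$ for $m=1,\dots,M$, and some consistent DAG extension of $G_{P,\mathcal{K}'}$ contains $a_m\to b$ for all $m\le M$. Orient $a_m\to b$ for all $m\le M$ and then close the orientations under R1–R4. Then for every edge $a'\to b'$ oriented during this closure, $b'$ is a descendant of $b$ in the resulting PDAG.
   Context: A PDAG is a graph with directed and undirected edges and no directed cycle. The pattern of a DAG is the graph with the same skeleton in which an edge is directed iff it belongs to a v-structure (a triple $a\to c\leftarrow b$ with $a,b$ non-adjacent). A consistent DAG extension of a PDAG $G$ is a DAG with the same skeleton, the same orientation of every directed edge of $G$, and no v-structures other than those of $G$. A set $\mathcal{K}$ of orientations of undirected edges of $P$ is consistent background knowledge if some DAG with pattern $P$ contains all of them. $G_{P,\mathcal{K}}$ is obtained from $P$ by orienting the edges in $\mathcal{K}$ and then repeatedly applying until none applies: R1: if $k\to i$, $i - j$, $k,j$ non-adjacent, orient $i\to j$; R2: if $i\to k\to j$ and $i - j$, orient $i\to j$; R3: if $i - k$, $i - l$, $i - j$, $k\to j$, $l\to j$, $k,l$ non-adjacent, orient $i\to j$; R4: if $i - k$, $i - l$, $i - j$, $k\to l\to j$, $k,j$ non-adjacent, orient $i\to j$. Descendants are taken along directed edges; every node is a descendant of itself. *)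

(* A (partially directed) graph on a finite vertex type T is
   encoded by a boolean relation G : rel T (adjacency-matrix encoding):
     x -> y  iff  G x y && ~~ G y x
     x -  y  iff  G x y && G y x
     x, y adjacent iff G x y || G y x. *)
From mathcomp Require Import all_boot.
Set Implicit Arguments. Unset Strict Implicit. Unset Printing Implicit Defensive.

Section Graphs.
Variable T : finType.
Implicit Types (G D P K : rel T).

Definition dir G : rel T := fun x y => G x y && ~~ G y x.
Definition und G : rel T := fun x y => G x y && G y x.
Definition adj G : rel T := fun x y => G x y || G y x.

Definition is_dag D : Prop :=
  [/\ forall x, ~~ D x x,
      forall x y, ~~ (D x y && D y x)
    & forall x y, D x y -> ~~ connect D y x].

Definition vstruct G (a c b : T) : bool :=
  [&& dir G a c, dir G b c, a != b & ~~ adj G a b].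

Definition in_vstruct G (x y : T) : bool := [exists z, vstruct G x y z].

(* pattern of a DAG: same skeleton, edge directed iff it belongs to a v-structure *)
Definition pattern D : rel T :=
  fun x y => adj D x y && ~~ (D y x && in_vstruct D y x).

Definition has_pattern D P : Prop := is_dag D /\ forall x y, P x y = pattern D x y.

Definition consistent_extension D G : Prop :=
  [/\ is_dag D,
      forall x y, adj D x y = adj G x y,
      forall x y, dir G x y -> D x y
    & forall a c b, vstruct D a c b -> vstruct G a c b].

(* K (K x y = "orient x -> y") is consistent background knowledge for P *)
Definition consistent_bk P K : Prop :=
  (forall x y, K x y -> und P x y) /\
  exists D, has_pattern D P /\ forall x y, K x y -> D x y.

Definition orient G (i j : T) : rel T :=
  fun x y => if (x == i) && (y == j) then true
             else if (x == j) && (y == i) then false else G x y.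

Definition orientK P K : rel T :=
  fun x y => if K x y then true else if K y x then false else P x y.

(* Meek rules: conditions under which the undirected edge i - j gets i -> j *)
Definition R1 G (i j : T) : Prop := exists k, dir G k i /\ ~~ adj G k j.
Definition R2 G (i j : T) : Prop := exists k, dir G i k /\ dir G k j.
Definition R3 G (i j : T) : Prop :=
  exists k l, [/\ und G i k, und G i l, dir G k j, dir G l j & (k != l) && ~~ adj G k l].
Definition R4 G (i j : T) : Prop :=
  exists k l, [/\ und G i k, und G i l, dir G k l, dir G l j & ~~ adj G k j].

Definition rule_applies G i j : Prop :=
  und G i j /\ (R1 G i j \/ R2 G i j \/ R3 G i j \/ R4 G i j).

Inductive rule_reach : rel T -> rel T -> Prop :=
| rr_refl G H : (forall x y, G x y = H x y) -> rule_reach G H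
| rr_step G i j H : rule_applies G i j -> rule_reach (orient G i j) H -> rule_reach G H.

Definition meek_closure G H : Prop :=
  rule_reach G H /\ forall i j, ~ rule_applies H i j.

Definition orient_all G (s : seq T) (b : T) : rel T :=
  foldr (fun a H => orient H a b) G s.

End Graphs.

From mathcomp Require Import all_boot.
Set Implicit Arguments. Unset Strict Implicit. Unset Printing Implicit Defensive.

(* Along the rule applications from [orient_all G1 s b] to [G3] we maintain the
   invariant that every directed edge x -> y of the current graph is either
   already directed in [G1] or has its head y below b.  A rule firing at i - j
   cannot draw all its directed premises from [G1]: the skeleton never changes
   and [G1] is closed under R1-R4.  One premise k -> l is therefore new, so l is
   below b, and l is either i (R1) or j or a parent of j (R2-R4); hence j is
   below b after orienting i -> j. *)

Section Orient.
Variable T : finType.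
Implicit Types (H : rel T) (i j x y : T).

Local Ltac case_orient H :=
  rewrite /und /dir /adj /orient;
  repeat (case: eqP => [?|?]; subst => //=);
  repeat match goal with |- context[H ?u ?v] => case: (H u v) end.

Lemma adj_orient H i j x y : adj H i j -> adj (orient H i j) x y = adj H x y.
Proof. by case_orient H. Qed.

Lemma und_orient H i j x y : adj H i j -> und (orient H i j) x y -> und H x y.
Proof. by case_orient H. Qed.

Lemma dir_orient_inv H i j x y :
  dir (orient H i j) x y -> dir H x y \/ (x = i /\ y = j).
Proof. by case_orient H; auto. Qed.

Lemma dir_orient_subrel H i j : und H i j -> subrel (dir H) (dir (orient H i j)).
Proof. by move=> + x y; case_orient H. Qed.

Lemma dir_orient_new H i j : i != j -> dir (orient H i j) i j.
Proof. by case_orient H. Qed.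

Lemma connect_dir_orient H i j :
  und H i j -> subrel (connect (dir H)) (connect (dir (orient H i j))).
Proof.
by move=> uij; apply: connect_sub => x y /(dir_orient_subrel uij)/connect1.
Qed.

Lemma adj_orient_all G s b x y :
  (forall a, a \in s -> adj G a b) -> adj (orient_all G s b) x y = adj G x y.
Proof.
elim: s x y => //= a s IHs x y adj_s.
have adj_s' c : c \in s -> adj G c b by move=> sc; apply: adj_s; rewrite inE sc orbT.
by rewrite adj_orient !IHs // adj_s ?mem_head.
Qed.

Lemma und_orient_all G s b x y :
  (forall a, a \in s -> adj G a b) -> und (orient_all G s b) x y -> und G x y.
Proof.
elim: s => //= a s IHs adj_s.
have adj_s' c : c \in s -> adj G c b by move=> sc; apply: adj_s; rewrite inE sc orbT.
have adj_ab : adj (orient_all G s b) a b by rewrite adj_orient_all // adj_s ?mem_head.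
by move/(und_orient adj_ab)/IHs; apply.
Qed.

Lemma dir_orient_all G s b x y : dir (orient_all G s b) x y -> dir G x y \/ y = b.
Proof.
elim: s => [|a s IHs] /=; first by left.
by case/dir_orient_inv => [/IHs|[_ ->]]; auto.
Qed.

Lemma rule_applies_neq H i j : rule_applies H i j -> i != j.
Proof.
case=> _; apply: contraPneq => <-; rewrite /R1 /R2 /R3 /R4 /dir /und /adj.
case=> [[k [/andP[-> _]]] //|[[k [/andP[_ /negP nki] /andP[/nki]]] //|]].
case=> [[k [l [/andP[-> _] _ /andP[_ /negP //]]]]|].
by case=> k [l [_ /andP[-> _] _ /andP[_ /negP]]].
Qed.

End Orient.

Section ClosedRefinement.
Variables (T : finType) (G1 : rel T) (b : T).
Hypothesis G1_closed : forall i j, ~ rule_applies G1 i j.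
Implicit Types (H : rel T) (i j k l x y : T).

Definition refines H :=
  (forall x y, adj H x y = adj G1 x y) /\ (forall x y, und H x y -> und G1 x y).

Definition new_edges_below H :=
  forall x y, dir H x y -> dir G1 x y \/ connect (dir H) b y.

Lemma refines_orient H i j : refines H -> und H i j -> refines (orient H i j).
Proof.
move=> [adjH undH] uij; have /andP[Hij _] := uij.
have aij : adj H i j by rewrite /adj Hij.
by split=> x y; [rewrite adj_orient | move/(und_orient aij)/undH].
Qed.

Lemma rule_applies_below H i j :
  refines H -> new_edges_below H -> rule_applies H i j ->
  connect (dir H) b i \/ connect (dir H) b j.
Proof.
move=> [adjH undH] belowH [/undH uij rule].
have G1_rule : R1 G1 i j \/ R2 G1 i j \/ R3 G1 i j \/ R4 G1 i j -> False.
  by move=> r; apply: (@G1_closed i j).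
have extend k : connect (dir H) b k -> dir H k j -> connect (dir H) b j.
  by move=> bk kj; apply: connect_trans bk (connect1 kj).
case: rule => [[k [ki nkj]]|[[k [ik kj]]|[[k [l [uik uil kj lj nkl]]]|]]].
- case: (belowH _ _ ki) => [ki1|]; last by left.
  by case: G1_rule; left; exists k; rewrite -adjH.
- case: (belowH _ _ kj) => [kj1|]; last by right.
  case: (belowH _ _ ik) => [ik1|bk]; last by right; apply: extend kj.
  by case: G1_rule; right; left; exists k.
- case: (belowH _ _ kj) => [kj1|]; last by right.
  case: (belowH _ _ lj) => [lj1|]; last by right.
  case: G1_rule; right; right; left; exists k, l.
  by rewrite !undH // -adjH.
- move=> [k [l [uik uil kl lj nkj]]].
  case: (belowH _ _ lj) => [lj1|]; last by right.
  case: (belowH _ _ kl) => [kl1|bl]; last by right; apply: extend lj.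
  case: G1_rule; right; right; right; exists k, l.
  by rewrite !undH // -adjH.
Qed.

Lemma new_edges_below_orient H i j :
  refines H -> new_edges_below H -> rule_applies H i j ->
  new_edges_below (orient H i j).
Proof.
move=> refH belowH rule; have [uij _] := rule.
have new_ij := dir_orient_new H (rule_applies_neq rule).
have lift := connect_dir_orient uij.
move=> x y /dir_orient_inv [xy|[_ ->]].
  by case: (belowH _ _ xy) => [|/lift]; auto.
right; case: (rule_applies_below refH belowH rule) => [/lift bi|/lift //].
exact: connect_trans bi (connect1 new_ij).
Qed.

Lemma rule_reach_below H H' :
  rule_reach H H' -> refines H -> new_edges_below H -> new_edges_below H'.
Proof.
elim=> {H H'} [H H' eqHH'|H i j H' rule _ IH] refH belowH.
  have eq_dir : dir H =2 dir H' by move=> x y; rewrite /dir !eqHH'.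
  by move=> x y; rewrite -eq_dir -(eq_connect eq_dir); apply: belowH.
apply: IH; first by apply: refines_orient rule.1.
exact: new_edges_below_orient.
Qed.

End ClosedRefinement.

Theorem mainTheorem16 (T : finType) (P K' G1 : rel T) (s : seq T) (b : T) :
  consistent_bk P K' ->
  meek_closure (orientK P K') G1 ->
  (forall a, a \in s -> und G1 a b) ->
  (exists D, consistent_extension D G1 /\ forall a, a \in s -> D a b) ->
  forall G3, meek_closure (orient_all G1 s b) G3 ->
  forall x y, und (orient_all G1 s b) x y -> dir G3 x y ->
  connect (dir G3) b y.
Proof.
move=> _ [_ G1_closed] und_s _ G3 [reach _] x y uxy dxy.
have adj_s a : a \in s -> adj G1 a b by move/und_s/andP=> [ab _]; rewrite /adj ab.
have refG2 : refines G1 (orient_all G1 s b).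
  by split=> p q; [apply: adj_orient_all | apply: und_orient_all].
have belowG2 : new_edges_below G1 b (orient_all G1 s b).
  by move=> p q /dir_orient_all [|->]; [left | right].
case: (rule_reach_below G1_closed reach refG2 belowG2 dxy) => // /andP[_ nyx].
by have /andP[_ yx] := und_orient_all adj_s uxy; rewrite yx in nyx.
Qed.
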